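(* Let $\Sigma$ be a ranked set and $L\subseteq\mathsf{H}_0\Sigma$. The following are equivalent: (1) $L$ is recognised by an $\mathsf{H}$-algebra that is finite on every arity; (2) $L$ is recognised by (i.e. is a union of classes of) a congruence of the algebra $\mathsf{H}\Sigma$ with finitely many equivalence classes on every arity; (3) $L$ is recognised by an equivalence relation on $\mathsf{H}\Sigma$ that is compatible with all HR-operations and has finitely many equivalence classes on every arity.
   Context: A ranked set is a set in which each element has an arity in $\{0,1,2,\dots\}$; morphisms are arity-preserving functions. A sourced hypergraph of arity $n$ over $\Sigma$: finite vertex set, finite ranked set of hyperedges labelled arity-preservingly by $\Sigma$, incidence mapping each $m$-ary hyperedge $e$ to a non-repeating list $e[1],\dots,e[m]$ of vertices, injective source function $\{1,\dots,n\}\to$ vertices. $\mathsf{H}\Sigma$: such objects up to isomorphism; $\mathsf{H}_0\Sigma$: the arity-0 ones. Unit of $n$-ary $a$: vertices $1..n$ (identity sources), one hyperedge labelled $a$ with incidence $[1,\dots,n]$. Flattening of $G\in\mathsf{H}\mathsf{H}\Sigma$: hyperedges are pairs $(e,f)$ with $e$ a hyperedge of $G$ and $f$ a hyperedge of the label of $e$ (label from $f$); vertices are vertices of $G$ and pairs $(e,v)$ with $v$ a non-source vertex of the label of $e$; sources from $G$; the incidence of $(e,f)$ is that of $f$ with $v\mapsto(e,v)$ for non-sources and $v\mapsto e[i]$ if $v$ is the $i$-th source of the label of $e$. An $\mathsf{H}$-algebra is a ranked set $A$ with arity-preserving $\pi:\mathsf{H}A\to A$ such that $\pi(\mathrm{unit}\,a)=a$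 and $\pi\circ\mathsf{H}\pi=\pi\circ\mathrm{flatten}$ (with $\mathsf{H}\pi$ acting by relabelling); homomorphisms $h$ satisfy $h\circ\pi_A=\pi_B\circ\mathsf{H}h$. $\mathsf{H}\Sigma$ is an algebra with flattening as product. $L$ is recognised by $\mathcal{A}$ if $L=h^{-1}(F)\cap\mathsf{H}_0\Sigma$ for some homomorphism $h:\mathsf{H}\Sigma\to\mathcal{A}$ and set $F$. For a ranked set $X$ of variables and $t\in\mathsf{H}(\mathsf{H}\Sigma+X)$, the polynomial operation $(\mathsf{H}\Sigma)^X\to\mathsf{H}\Sigma$ maps an arity-preserving valuation $\eta$ to the flattening of $t$ with every label $x\in X$ replaced by $\eta(x)$. An equivalence relation on $\mathsf{H}\Sigma$ is compatible with an operation if componentwise equivalent inputs give equivalent outputs; a congruence is an equivalence relation compatible with all polynomial operations. The HR-operations are: for each $n$, parallel composition of two $n$-ary sourced hypergraphs (disjoint union with corresponding sources fused); for each $n$, the operation adding a new isolated vertex that becomes source $n+1$; a constant for the empty hypergraph (arity 0) and a constant for the unit of each $a\in\Sigma$; for each injective $f:\{1,\dots,k\}\to\{1,\dots,n\}$, the operation mapping an $n$-ary sourced hypergraph to the $k$-ary one whose source function is the old source function composed with $f$. *)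

From HB Require Import structures.
From mathcomp Require Import all_boot.

Set Implicit Arguments.
Unset Strict Implicit.
Unset Printing Implicit Defensive.

Record rset := RSet { rcar :> Type; rar : rcar -> nat }.

Record rmap (A B : rset) := RMap {
  rfun :> A -> B;
  rfunP : forall a, rar (rfun a) = rar a }.

Record hg (A : rset) := HG {
  hV : finType;
  hE : finType;
  hlab : hE -> A;
  hinc : hE -> seq hV;
  hsrc : seq hV;
  hinc_size : forall e, size (hinc e) = rar (hlab e);
  hinc_uniq : forall e, uniq (hinc e);
  hsrc_uniq : uniq hsrc }.

Definition harity (A : rset) (g : hg A) : nat := size (hsrc g).
Definition HR (A : rset) : rset := @RSet (hg A) (@harity A).

Definition hunit (A : rset) (a : A) : hg A :=
  @HG A ('I_(rar a) : finType) (unit : finType) (fun _ => a)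
    (fun _ => enum 'I_(rar a)) (enum 'I_(rar a))
    (fun _ => size_enum_ord _) (fun _ => enum_uniq _) (enum_uniq _).

Definition hempty (A : rset) : hg A :=
  @HG A (void : finType) (void : finType) (fun e => match e with end)
    (fun e => match e with end) [::]
    (fun e => match e with end) (fun e => match e with end) isT.

Fixpoint nth_lt (T : Type) (s : seq T) (i : nat) : i < size s -> T :=
  match s return i < size s -> T with
  | [::] => fun H => False_rect _ (ltac:(discriminate H))
  | x :: s' => match i return i < (size s').+1 -> T with
               | 0 => fun _ => x
               | i'.+1 => fun H => @nth_lt T s' i' H
               end
  end.

Lemma nth_ltE (T : Type) (s : seq T) i (H : i < size s) x0 : nth_lt H = nth x0 s i.
Proof. by elim: s i H => [|x s IH] [|i] //= H. Qed.

(* Gluing the vertices of a hypergraph [x] onto a list [b] of vertices of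
   another structure: the i-th source of [x] is sent to the i-th entry of [b],
   and every non-source vertex of [x] is kept (as an element of [nonsrc x]). *)
Definition nonsrc (A : rset) (x : hg A) : finType :=
  ({v : hV x | v \notin hsrc x} : finType).

Definition decb (c : bool) : {c} + {~~ c} :=
  if c as c' return {c'} + {~~ c'} then left isT else right isT.

Section Attach.
Variables (A : rset) (x : hg A) (W : eqType) (b : seq W)
          (Hb : size b = size (hsrc x)).

Lemma attach_lt (v : hV x) : v \in hsrc x -> index v (hsrc x) < size b.
Proof. by rewrite Hb index_mem. Qed.

Definition attach (v : hV x) : W + nonsrc x :=
  match decb (v \in hsrc x) with
  | left H => inl (nth_lt (attach_lt H))
  | right H => inr (exist _ v H : nonsrc x)
  end.

Lemma attach_src v w0 : v \in hsrc x -> attach v = inl (nth w0 b (index v (hsrc x))).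
Proof.
move=> H; rewrite /attach; case: decb => H0.
  by rewrite (nth_ltE _ w0).
by exfalso; rewrite H in H0.
Qed.

Lemma attach_nsrc v (H : v \notin hsrc x) : attach v = inr (exist _ v H : nonsrc x).
Proof.
rewrite /attach; case: decb => H0; first by exfalso; rewrite H0 in H.
by congr inr; apply: val_inj.
Qed.

Lemma attach_inj : uniq b -> injective attach.
Proof.
move=> ub v1 v2.
case: (boolP (v1 \in hsrc x)) => H1; case: (boolP (v2 \in hsrc x)) => H2.
- pose w0 := nth_lt (attach_lt H1).
  rewrite !(attach_src w0) // => -[].
  move/eqP; rewrite nth_uniq ?attach_lt //.
  move/eqP=> E.
  by rewrite -(nth_index v1 H1) -(nth_index v1 H2) E.
- by rewrite (attach_src (nth_lt (attach_lt H1)) H1) (attach_nsrc H2).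
- by rewrite (attach_src (nth_lt (attach_lt H2)) H2) (attach_nsrc H1).
- by rewrite (attach_nsrc H1) (attach_nsrc H2) => -[].
Qed.
End Attach.

Lemma Tagged_inj (I : eqType) (T_ : I -> Type) (i : I) (u1 u2 : T_ i) :
  Tagged T_ u1 = Tagged T_ u2 -> u1 = u2.
Proof.
move=> E; have := congr1 (tagged_as (Tagged T_ u1)) E.
by rewrite !tagged_asE.
Qed.

Definition relabel (A B : rset) (f : rmap A B) (g : hg A) : hg B :=
  @HG B (hV g) (hE g) (fun e => f (hlab e)) (fun e => hinc e) (hsrc g)
    (fun e => etrans (hinc_size e) (esym (rfunP f _)))
    (fun e => hinc_uniq e) (hsrc_uniq g).

Definition iso (A : rset) (R : A -> A -> Prop) (g h : hg A) : Prop :=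
  exists (fv : hV g -> hV h) (fe : hE g -> hE h),
    [/\ bijective fv, bijective fe,
        forall e, R (hlab e) (hlab (fe e)),
        forall e, hinc (fe e) = map fv (hinc e)
      & hsrc h = map fv (hsrc g)].

Section Flatten.
Variables (A : rset) (G : hg (HR A)).

Definition fl_V : finType :=
  (hV G + {e : hE G & nonsrc (@hlab _ G e)})%type.
Definition fl_E : finType := {e : hE G & hE (@hlab _ G e)}.

Definition fl_vert (e : hE G) (v : hV (@hlab _ G e)) : fl_V :=
  match attach (hinc_size e : size (hinc e) = size (hsrc (@hlab _ G e))) v with
  | inl w => inl w
  | inr u => inr (Tagged (fun e => nonsrc (@hlab _ G e)) u)
  end.

Lemma fl_vert_inj e : injective (@fl_vert e).
Proof.
move=> v1 v2; rewrite /fl_vert.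
have Ainj := @attach_inj _ _ _ _ (hinc_size e : size (hinc e) = size (hsrc (@hlab _ G e)))
                        (hinc_uniq e).
case E1: attach => [w1|u1]; case E2: attach => [w2|u2] //.
- by move=> [E]; apply: Ainj; rewrite E1 E2 E.
- move=> [] H; have E := Tagged_inj H.
  by apply: Ainj; rewrite E1 E2 E.
Qed.

Definition fl_lab (ef : fl_E) : A := hlab (tagged ef).
Definition fl_inc (ef : fl_E) : seq fl_V :=
  map (@fl_vert (tag ef)) (hinc (tagged ef)).

Lemma fl_inc_size ef : size (fl_inc ef) = rar (fl_lab ef).
Proof. by rewrite size_map hinc_size. Qed.

Lemma fl_inc_uniq ef : uniq (fl_inc ef).
Proof. by rewrite map_inj_uniq ?hinc_uniq //; apply: fl_vert_inj. Qed.

Lemma fl_src_uniq : uniq (map inl (hsrc G) : seq fl_V).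
Proof. by rewrite map_inj_uniq ?hsrc_uniq // => ? ? []. Qed.

Definition flatten : hg A :=
  @HG A fl_V fl_E fl_lab fl_inc (map inl (hsrc G))
    fl_inc_size fl_inc_uniq fl_src_uniq.
End Flatten.

(* parallel composition of two sourced hypergraphs of the same arity:
   disjoint union, with the i-th source of [h] fused with the i-th source of [g] *)
Section Par.
Variables (A : rset) (g h : hg A) (p : harity g = harity h).

Definition par_V : finType := (hV g + nonsrc h)%type.
Definition par_E : finType := (hE g + hE h)%type.
Definition par_lab (e : par_E) : A :=
  match e with inl e => hlab e | inr e => hlab e end.
Definition par_inc (e : par_E) : seq par_V :=
  match e with
  | inl e => map inl (hinc e)
  | inr e => map (attach (p : size (hsrc g) = size (hsrc h))) (hinc e)
  end.

Lemma par_inc_size e : size (par_inc e) = rar (par_lab e).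
Proof. by case: e => e /=; rewrite size_map hinc_size. Qed.

Lemma par_inc_uniq e : uniq (par_inc e).
Proof.
case: e => e /=; rewrite map_inj_uniq ?hinc_uniq //; first by move=> ? ? [].
exact: (@attach_inj _ _ _ _ (p : size (hsrc g) = size (hsrc h)) (hsrc_uniq g)).
Qed.

Lemma par_src_uniq : uniq (map inl (hsrc g) : seq par_V).
Proof. by rewrite map_inj_uniq ?hsrc_uniq // => ? ? []. Qed.

Definition hpar : hg A :=
  @HG A par_V par_E par_lab par_inc (map inl (hsrc g))
      par_inc_size par_inc_uniq par_src_uniq.
End Par.

Section AddSrc.
Variables (A : rset) (g : hg A).

Lemma addsrc_inc_size (e : hE g) : size (map Some (hinc e)) = rar (hlab e).
Proof. by rewrite size_map hinc_size. Qed.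

Lemma addsrc_inc_uniq (e : hE g) : uniq (map Some (hinc e) : seq (option (hV g))).
Proof. by rewrite map_inj_uniq ?hinc_uniq // => ? ? []. Qed.

Lemma addsrc_src_uniq : uniq (rcons (map Some (hsrc g)) None).
Proof.
rewrite rcons_uniq map_inj_uniq ?hsrc_uniq ?andbT //; last by move=> ? ? [].
by apply/mapP => -[].
Qed.

Definition haddsrc : hg A :=
  @HG A (option (hV g) : finType) (hE g) (fun e => hlab e)
      (fun e => map Some (hinc e)) (rcons (map Some (hsrc g)) None)
      addsrc_inc_size addsrc_inc_uniq addsrc_src_uniq.
End AddSrc.

Section Forget.
Variables (A : rset) (k n : nat) (f : 'I_k -> 'I_n) (finj : injective f)
          (g : hg A) (p : harity g = n).

Lemma forget_lt (i : 'I_k) : f i < size (hsrc g).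
Proof. by rewrite [size _]p ltn_ord. Qed.

Definition forget_src : seq (hV g) :=
  [seq nth_lt (forget_lt i) | i <- enum 'I_k].

Lemma forget_src_uniq : uniq forget_src.
Proof.
rewrite map_inj_uniq ?enum_uniq // => i j /=.
have x0 := nth_lt (forget_lt i); rewrite !(nth_ltE _ x0).
move/eqP; rewrite nth_uniq ?forget_lt ?hsrc_uniq // => /eqP E.
by apply: finj; apply: val_inj.
Qed.

Definition hforget : hg A :=
  @HG A (hV g) (hE g) (fun e => hlab e) (fun e => hinc e) forget_src
      (fun e => hinc_size e) (fun e => hinc_uniq e) forget_src_uniq.
End Forget.

Definition sum_ar (A B : rset) (s : (A + B)%type) : nat :=
  match s with inl a => rar a | inr b => rar b end.
Definition sumR (A B : rset) : rset := @RSet (A + B)%type (@sum_ar A B).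

Definition copair_fun (S X : rset) (eta : rmap X (HR S)) (s : sumR (HR S) X)
  : HR S := match s with inl g => g | inr x => eta x end.

Lemma copair_funP (S X : rset) (eta : rmap X (HR S)) s :
  rar (copair_fun eta s) = rar s.
Proof. by case: s => // x; exact: (rfunP eta x). Qed.

Definition copair (S X : rset) (eta : rmap X (HR S)) : rmap (sumR (HR S) X) (HR S)
  := RMap (copair_funP eta).

Definition polyop (S X : rset) (t : hg (sumR (HR S) X)) (eta : rmap X (HR S))
  : hg S := flatten (relabel (copair eta) t).

(* H A is taken up to isomorphism: the product must be isomorphism invariant *)
Definition is_Halg (A : rset) (pi : rmap (HR A) A) : Prop :=
  [/\ forall g g' : hg A, iso (@eq A) g g' -> pi g = pi g',
      forall a : A, pi (hunit a) = a
    & forall G : hg (HR A), pi (relabel pi G) = pi (flatten G)].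

Definition is_Hhom (S A : rset) (pi : rmap (HR A) A) (h : rmap (HR S) A) : Prop :=
  (forall g g' : hg S, iso (@eq S) g g' -> h g = h g') /\
  (forall G : hg (HR S), h (flatten G) = pi (relabel h G)).

Definition finite_on_arities (A : rset) : Prop :=
  forall n, exists (m : nat) (enm : 'I_m -> A),
    forall a : A, rar a = n -> exists i, enm i = a.

Definition recognised_by_alg (S A : rset) (L : hg S -> Prop)
  (pi : rmap (HR A) A) : Prop :=
  exists h : rmap (HR S) A, is_Hhom pi h /\
    exists F : A -> Prop, forall g : hg S, L g <-> (F (h g) /\ harity g = 0).

(* equivalence relations on the ranked set H S (so arity-respecting and
   defined on isomorphism classes) *)
Definition hequiv (S : rset) (R : hg S -> hg S -> Prop) : Prop :=
  [/\ forall g, R g g,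
      forall g g', R g g' -> R g' g,
      forall g1 g2 g3, R g1 g2 -> R g2 g3 -> R g1 g3,
      forall g g', R g g' -> harity g = harity g'
    & forall g g', iso (@eq S) g g' -> R g g'].

Definition finite_index (S : rset) (R : hg S -> hg S -> Prop) : Prop :=
  forall n, exists (m : nat) (rep : 'I_m -> hg S),
    forall g, harity g = n -> exists i, R g (rep i).

Definition saturates (S : rset) (R : hg S -> hg S -> Prop) (L : hg S -> Prop)
  : Prop := forall g g', R g g' -> L g -> L g'.

Definition congruence (S : rset) (R : hg S -> hg S -> Prop) : Prop :=
  hequiv R /\
  forall (X : rset) (t : hg (sumR (HR S) X)) (eta1 eta2 : rmap X (HR S)),
    (forall x, R (eta1 x) (eta2 x)) -> R (polyop t eta1) (polyop t eta2).

(* compatibility with the HR-operations (compatibility with the constants,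
   empty hypergraph and units, is automatic by reflexivity) *)
Definition HR_compatible (S : rset) (R : hg S -> hg S -> Prop) : Prop :=
  [/\ hequiv R,
      forall (g1 g2 h1 h2 : hg S) (p1 : harity g1 = harity h1)
             (p2 : harity g2 = harity h2),
        R g1 g2 -> R h1 h2 -> R (hpar p1) (hpar p2),
      forall g1 g2 : hg S, R g1 g2 -> R (haddsrc g1) (haddsrc g2)
    & forall (k n : nat) (f : 'I_k -> 'I_n) (finj : injective f)
             (g1 g2 : hg S) (p1 : harity g1 = n) (p2 : harity g2 = n),
        R g1 g2 -> R (hforget finj p1) (hforget finj p2)].

(* (1) => (2): the kernel of a recognising homomorphism into an algebra with
   finitely many elements of each arity is a congruence of finite index.
   (2) => (1): the classes of a congruence form an H-algebra whose product
   flattens representatives; the H-algebra laws come from the unit and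
   associativity laws of flattening, which hold up to isomorphism.
   (2) => (3): each HR-operation is, up to isomorphism, the polynomial operation
   of a term with one or two hyperedges.
   (3) => (2): it suffices to substitute related hypergraphs into an arbitrary
   hypergraph G. Removing a hyperedge e of G, the flattening of G is the
   flattening of G - e in parallel with the label of e (padded with fresh
   sources), followed by forgetting sources; induct on the number of
   hyperedges. *)

From HB Require Import structures.
From mathcomp Require Import all_boot.
From Stdlib Require Import ProofIrrelevance FunctionalExtensionality.
From Stdlib Require Import PropExtensionality ClassicalEpsilon.

Set Implicit Arguments.
Unset Strict Implicit.
Unset Printing Implicit Defensive.

Lemma inj_surj_bij (T U : finType) (f : T -> U) :
  injective f -> (forall y, exists x, f x = y) -> bijective f.
Proof.
move=> f_inj f_surj.
have g_spec y : {x | f x = y}.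
  case: (pickP [pred x | f x == y]) => [x /eqP fx|none]; first by exists x.
  by exfalso; have [x fx] := f_surj y; move: (none x); rewrite /= fx eqxx.
exists (fun y => sval (g_spec y)) => [x|y]; last by case: (g_spec y).
by apply: f_inj; case: (g_spec (f x)).
Qed.

Lemma bij_surj (T U : Type) (f : T -> U) : bijective f -> forall y, exists x, f x = y.
Proof. by case=> g _ fK y; exists (g y). Qed.

Lemma Tagged_inj_tag (I : eqType) (T_ : I -> Type) (i j : I) (u : T_ i) (v : T_ j) :
  Tagged T_ u = Tagged T_ v -> i = j.
Proof. by move/(congr1 tag). Qed.

Section SigmaSumMaps.
Variables (I J : eqType) (TI : I -> Type) (TJ : J -> Type).
Variables (fi : I -> J) (ft : forall i, TI i -> TJ (fi i)).

Lemma sigma_map_inj : injective fi -> (forall i, injective (@ft i)) ->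
  injective (fun x : {i : I & TI i} => Tagged TJ (ft (tagged x))).
Proof.
move=> fi_inj ft_inj [i u] [j v] /= E.
have eq_ij := fi_inj _ _ (Tagged_inj_tag E); subst j.
by rewrite (ft_inj _ _ _ (Tagged_inj E)).
Qed.

Lemma sigma_map_surj : (forall j, exists i, fi i = j) -> (forall i y, exists x, @ft i x = y) ->
  forall y, exists x : {i : I & TI i}, Tagged TJ (ft (tagged x)) = y.
Proof.
move=> fi_surj ft_surj [j v]; have [i eq_ij] := fi_surj j; subst j.
by have [u <-] := ft_surj i v; exists (Tagged TI u).
Qed.
End SigmaSumMaps.

Section SumMaps.
Variables (T1 T2 U1 U2 : Type) (f1 : T1 -> U1) (f2 : T2 -> U2).

Lemma sum_map_inj : injective f1 -> injective f2 ->
  injective (fun x => match x with inl a => @inl U1 U2 (f1 a) | inr b => inr (f2 b) end).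
Proof.
by move=> inj1 inj2 [a|b] [a'|b'] // [] E; rewrite ?(inj1 _ _ E) ?(inj2 _ _ E).
Qed.

Lemma sum_map_surj : (forall y, exists x, f1 x = y) -> (forall y, exists x, f2 x = y) ->
  forall y, exists x,
    (fun x => match x with inl a => @inl U1 U2 (f1 a) | inr b => inr (f2 b) end) x = y.
Proof.
move=> surj1 surj2 [a|b]; first by have [x <-] := surj1 a; exists (inl x).
by have [x <-] := surj2 b; exists (inr x).
Qed.
End SumMaps.

(** * Isomorphism, relabelling and flattening *)

Section Iso.
Variable A : rset.

Lemma HG_eq (V E : finType) (l1 l2 : E -> A) (i1 i2 : E -> seq V) (s1 s2 : seq V)
    p1 p2 q1 q2 r1 r2 :
  l1 = l2 -> i1 = i2 -> s1 = s2 ->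
  @HG A V E l1 i1 s1 p1 q1 r1 = @HG A V E l2 i2 s2 p2 q2 r2.
Proof.
move=> El Ei Es; subst.
by rewrite (proof_irrelevance _ p1 p2) (proof_irrelevance _ q1 q2) (proof_irrelevance _ r1 r2).
Qed.

Lemma iso_of_inj_surj (R : A -> A -> Prop) (g h : hg A)
    (fv : hV g -> hV h) (fe : hE g -> hE h) :
  injective fv -> (forall y, exists x, fv x = y) ->
  injective fe -> (forall y, exists x, fe x = y) ->
  (forall e, R (hlab e) (hlab (fe e))) ->
  (forall e, hinc (fe e) = map fv (hinc e)) ->
  hsrc h = map fv (hsrc g) -> iso R g h.
Proof.
by move=> fv_inj fv_surj fe_inj fe_surj; exists fv, fe; split=> //; apply: inj_surj_bij.
Qed.

Lemma iso_refl (g : hg A) : iso eq g g.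
Proof. by exists id, id; split=> [||//|e|]; rewrite ?map_id //; apply: inv_bij. Qed.

Lemma iso_mono (R R' : A -> A -> Prop) (g h : hg A) :
  (forall a b, R a b -> R' a b) -> iso R g h -> iso R' g h.
Proof.
move=> RR' [fv [fe [fv_bij fe_bij lab fe_inc fv_src]]].
by exists fv, fe; split=> // e; apply: RR'.
Qed.

Lemma iso_sig (R : A -> A -> Prop) (g h : hg A) : iso R g h ->
  {fv : hV g -> hV h & {fe : hE g -> hE h | [/\ bijective fv, bijective fe,
      forall e, R (hlab e) (hlab (fe e)),
      forall e, hinc (fe e) = map fv (hinc e)
    & hsrc h = map fv (hsrc g)]}}.
Proof.
move=> gh; have [fv ex_fe] := constructive_indefinite_description _ gh.
by have [fe Hfe] := constructive_indefinite_description _ ex_fe; exists fv, fe.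
Qed.
End Iso.

Definition rmap_id (A : rset) : rmap A A := @RMap A A id (fun _ => erefl).

Definition rmap_comp (A B C : rset) (f : rmap B C) (h : rmap A B) : rmap A C :=
  @RMap A C (fun a => f (h a)) (fun a => etrans (rfunP f (h a)) (rfunP h a)).

Definition relabelR (A B : rset) (f : rmap A B) : rmap (HR A) (HR B) :=
  @RMap (HR A) (HR B) (relabel f) (fun _ => erefl).

Section Relabel.
Variables (A B C : rset).

Lemma relabel_ext (f f' : rmap A B) (g : hg A) :
  (forall e : hE g, f (hlab e) = f' (hlab e)) -> relabel f g = relabel f' g.
Proof. by move=> ff'; apply: HG_eq => //; apply: functional_extensionality. Qed.

Lemma relabel_id (g : hg A) : relabel (rmap_id A) g = g.
Proof. by case: g => *; apply: HG_eq. Qed.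

Lemma relabel_comp (f : rmap B C) (h : rmap A B) (g : hg A) :
  relabel f (relabel h g) = relabel (rmap_comp f h) g.
Proof. exact: HG_eq. Qed.

Lemma relabel_iso (f : rmap A B) (g h : hg A) :
  iso eq g h -> iso eq (relabel f g) (relabel f h).
Proof.
case=> fv [fe [fv_bij fe_bij lab fe_inc fv_src]]; exists fv, fe; split=> // e.
by rewrite /= lab.
Qed.
End Relabel.

Lemma nth_lt_irr (T : Type) (s : seq T) i (p1 p2 : i < size s) : nth_lt p1 = nth_lt p2.
Proof. by rewrite (bool_irrelevance p1 p2). Qed.

Section FlattenVertex.
Variables (A : rset) (G : hg (HR A)) (e : hE G).

Lemma fl_vert_src (v : hV (hlab e)) w0 : v \in hsrc (hlab e) ->
  fl_vert v = inl (nth w0 (hinc e) (index v (hsrc (hlab e)))).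
Proof. by move=> v_src; rewrite /fl_vert (attach_src _ w0 v_src). Qed.

Lemma fl_vert_nsrc (v : hV (hlab e)) (v_nsrc : v \notin hsrc (hlab e)) :
  fl_vert v = inr (Tagged (fun e => nonsrc (@hlab _ G e)) (exist _ v v_nsrc : nonsrc _)).
Proof. by rewrite /fl_vert (attach_nsrc _ v_nsrc). Qed.
End FlattenVertex.

Lemma relabel_flatten (A B : rset) (f : rmap A B) (G : hg (HR A)) :
  relabel f (flatten G) = flatten (relabel (relabelR f) G).
Proof.
apply: HG_eq => //; apply: functional_extensionality => ef.
apply/eq_map => v; rewrite /fl_vert /attach; case: decb => //= v_src.
by congr inl; apply: nth_lt_irr.
Qed.

Definition nonsrc_map (A B : rset) (g : hg A) (h : hg B) (fv : hV g -> hV h)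
    (fv_nsrc : forall v, v \notin hsrc g -> fv v \notin hsrc h) (u : nonsrc g) : nonsrc h :=
  exist _ (fv (val u)) (fv_nsrc _ (valP u)).

Lemma nonsrc_map_inj (A B : rset) (g : hg A) (h : hg B) fv fv_nsrc :
  injective fv -> injective (@nonsrc_map A B g h fv fv_nsrc).
Proof. by move=> fv_inj [u ?] [v ?] [/fv_inj uv]; apply: val_inj. Qed.

Lemma nonsrc_map_surj (A B : rset) (g : hg A) (h : hg B) fv fv_nsrc :
  (forall y, exists x, fv x = y) -> (forall v, fv v \notin hsrc h -> v \notin hsrc g) ->
  forall y, exists x, @nonsrc_map A B g h fv fv_nsrc x = y.
Proof.
move=> fv_surj fv_nsrcV [w w_nsrc]; have [v eq_w] := fv_surj w; subst w.
by exists (exist _ v (fv_nsrcV _ w_nsrc)); apply: val_inj.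
Qed.

Section FlattenIso.
Variables (S : rset) (G G' : hg (HR S)) (fv : hV G -> hV G') (fe : hE G -> hE G').
Variable pv : forall e : hE G, hV (hlab e) -> hV (hlab (fe e)).
Variable pe : forall e : hE G, hE (hlab e) -> hE (hlab (fe e)).
Arguments pv : clear implicits.
Arguments pe : clear implicits.
Hypotheses (fv_bij : bijective fv) (fe_bij : bijective fe).
Hypotheses (pv_bij : forall e, bijective (pv e)) (pe_bij : forall e, bijective (pe e)).
Hypothesis fe_inc : forall e, hinc (fe e) = map fv (hinc e).
Hypothesis pe_lab : forall e f, hlab f = hlab (pe e f).
Hypothesis pe_inc : forall e f, hinc (pe e f) = map (pv e) (hinc f).
Hypothesis pv_src : forall e, hsrc (hlab (fe e)) = map (pv e) (hsrc (hlab e)).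

Lemma mem_pv_src (e : hE G) (v : hV (hlab e)) :
  (pv e v \in hsrc (hlab (fe e))) = (v \in hsrc (hlab e)).
Proof. by rewrite pv_src (mem_map (bij_inj (pv_bij e))). Qed.

Lemma pv_nsrc (e : hE G) (v : hV (hlab e)) :
  v \notin hsrc (hlab e) -> pv e v \notin hsrc (hlab (fe e)).
Proof. by rewrite mem_pv_src. Qed.

Definition flatten_iso_vert (x : hV (flatten G)) : hV (flatten G') :=
  match x with
  | inl v => inl (fv v)
  | inr t => inr (Tagged (fun e' => nonsrc (@hlab _ G' e'))
                         (nonsrc_map (@pv_nsrc (tag t)) (tagged t)))
  end.

Definition flatten_iso_edge (t : hE (flatten G)) : hE (flatten G') :=
  Tagged (fun e' => hE (@hlab _ G' e')) (pe (tag t) (tagged t)).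

Lemma flatten_iso_vert_inj : injective flatten_iso_vert.
Proof.
apply: sum_map_inj; first exact: bij_inj.
apply: (@sigma_map_inj _ _ _ _ fe (fun e => nonsrc_map (@pv_nsrc e))); first exact: bij_inj.
by move=> e; apply/nonsrc_map_inj/bij_inj.
Qed.

Lemma flatten_iso_vert_surj y : exists x, flatten_iso_vert x = y.
Proof.
apply: sum_map_surj; first exact: bij_surj.
apply: (@sigma_map_surj _ _ _ _ fe (fun e => nonsrc_map (@pv_nsrc e))); first exact: bij_surj.
move=> e; apply: nonsrc_map_surj => [|v]; first exact: bij_surj (pv_bij e).
by rewrite mem_pv_src.
Qed.

Lemma flatten_iso_inc t :
  hinc (flatten_iso_edge t) = map flatten_iso_vert (hinc t).
Proof.
case: t => e f; rewrite /= /fl_inc /= pe_inc -!map_comp; apply/eq_in_map => v _ /=.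
case: (boolP (v \in hsrc (@hlab _ G e))) => v_src; last first.
  rewrite (fl_vert_nsrc v_src) (fl_vert_nsrc (pv_nsrc v_src)) /=.
  by congr (inr (Tagged _ _)); apply: val_inj.
have v_src' : pv e v \in hsrc (hlab (fe e)) by rewrite mem_pv_src.
have w0 : hV G := nth_lt (attach_lt (hinc_size e) v_src).
rewrite (fl_vert_src w0 v_src) (fl_vert_src (fv w0) v_src') /= fe_inc pv_src.
rewrite (index_map (bij_inj (pv_bij e))) (nth_map w0) //.
by rewrite hinc_size /= /harity index_mem.
Qed.

Lemma flatten_iso_of : hsrc G' = map fv (hsrc G) -> iso eq (flatten G) (flatten G').
Proof.
move=> fv_src; apply: (@iso_of_inj_surj _ _ _ _ flatten_iso_vert flatten_iso_edge).
- exact: flatten_iso_vert_inj.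
- exact: flatten_iso_vert_surj.
- by apply: sigma_map_inj => [|e]; apply: bij_inj.
- by apply: sigma_map_surj => [|e]; apply: bij_surj.
- by case=> e f; rewrite /= /fl_lab /= pe_lab.
- exact: flatten_iso_inc.
- by rewrite /= fv_src -!map_comp.
Qed.
End FlattenIso.

Lemma flatten_iso (S : rset) (G G' : hg (HR S)) :
  iso (fun a b : HR S => iso eq a b) G G' -> iso eq (flatten G) (flatten G').
Proof.
case/iso_sig => fv [fe [fv_bij fe_bij lab_iso fe_inc fv_src]].
pose inner e := iso_sig (lab_iso e).
apply: (@flatten_iso_of _ _ _ fv fe (fun e => projT1 (inner e))
          (fun e => proj1_sig (projT2 (inner e)))) => // e;
  by case: (inner e) => pv [pe []].
Qed.

Lemma map_nth_lt_enum (T : Type) (s : seq T) :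
  map (fun i : 'I_(size s) => nth_lt (ltn_ord i : val i < size s)) (enum 'I_(size s)) = s.
Proof.
case: s => [|x s]; first by rewrite /= enum_ord0.
rewrite -[RHS]take_size -(map_nth_iota0 x (leqnn _)) -val_enum_ord -map_comp.
by apply/eq_map => i; apply: nth_ltE.
Qed.

Section SourcePosition.
Variables (S : rset) (g : hg S) (n : nat) (p : harity g = n).

Lemma src_pos_lt (i : 'I_n) : val i < size (hsrc g).
Proof. by apply: leq_trans (ltn_ord i) _; rewrite -p. Qed.

Definition src_at (i : 'I_n) : hV g := nth_lt (src_pos_lt i).

Lemma src_atE v0 (i : 'I_n) : src_at i = nth v0 (hsrc g) i.
Proof. exact: nth_ltE. Qed.

Lemma src_at_inj : injective src_at.
Proof.
move=> i j; have v0 := src_at i; rewrite !(src_atE v0) => /eqP.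
by rewrite nth_uniq ?hsrc_uniq ?src_pos_lt // => /eqP ij; apply: val_inj.
Qed.

Lemma mem_src_at (i : 'I_n) : src_at i \in hsrc g.
Proof. by rewrite (src_atE (src_at i)) mem_nth ?src_pos_lt. Qed.

Lemma index_src_lt v : v \in hsrc g -> index v (hsrc g) < n.
Proof. by rewrite -p /harity index_mem. Qed.

Lemma src_at_index v (v_src : v \in hsrc g) : src_at (Ordinal (index_src_lt v_src)) = v.
Proof. by rewrite (src_atE v) /= nth_index. Qed.

Lemma nth_enum_index v (v_src : v \in hsrc g) i0 :
  nth i0 (enum 'I_n) (index v (hsrc g)) = Ordinal (index_src_lt v_src).
Proof. by apply: val_inj; rewrite /= nth_enum_ord ?index_src_lt. Qed.
End SourcePosition.

Lemma map_src_at_enum (S : rset) (g : hg S) (n : nat) (p : harity g = n) :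
  map (src_at p) (enum 'I_n) = hsrc g.
Proof.
case: n / p; rewrite -[RHS]map_nth_lt_enum; apply: eq_map => i.
exact: nth_lt_irr.
Qed.

Definition unit_rset (n : nat) : rset := @RSet unit (fun _ => n).

Definition const_rmap (S : rset) (g : hg S) (n : nat) (p : harity g = n) :
  rmap (unit_rset n) (HR S) := @RMap (unit_rset n) (HR S) (fun _ => g) (fun _ => p).

Section OneEdge.
Variables (n : nat) (s : seq 'I_n) (s_uniq : uniq s).

Definition one_edge : hg (unit_rset n) :=
  @HG (unit_rset n) 'I_n unit (fun _ => tt) (fun _ => enum 'I_n) s
    (fun _ => size_enum_ord n) (fun _ => enum_uniq _) s_uniq.

Variables (S : rset) (g : hg S) (p : harity g = n).

Lemma resrc_uniq : uniq (map (src_at p) s).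
Proof. by rewrite map_inj_uniq //; apply: src_at_inj. Qed.

Definition hresrc : hg S :=
  @HG S (hV g) (hE g) (@hlab _ g) (@hinc _ g) (map (src_at p) s)
    (@hinc_size _ g) (@hinc_uniq _ g) resrc_uniq.

Lemma flatten_one_edge : iso eq (flatten (relabel (const_rmap p) one_edge)) hresrc.
Proof.
set G := relabel (const_rmap p) one_edge.
pose fv (x : hV (flatten G)) : hV g :=
  match x with inl i => src_at p i | inr t => val (tagged t) end.
pose fe (t : hE (flatten G)) : hE g := tagged t.
apply: (@iso_of_inj_surj _ eq _ hresrc fv fe).
- case=> [i|[[] [u u_nsrc]]] [j|[[] [w w_nsrc]]] //=.
  + by move/src_at_inj ->.
  + by move=> E; exfalso; move: w_nsrc; rewrite -E mem_src_at.
  + by move=> E; exfalso; move: u_nsrc; rewrite E mem_src_at.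
  + by move=> E; subst w; congr (inr (Tagged _ _)); apply: val_inj.
- move=> v; case: (boolP (v \in hsrc g)) => v_src.
    by exists (inl (Ordinal (index_src_lt p v_src))); rewrite /= src_at_index.
  by exists (inr (@Tagged _ tt (fun _ => nonsrc g) (exist _ v v_src : nonsrc g))).
- by case=> [[] f] [[] f'] /= E; subst f'.
- by move=> f; exists (@Tagged _ tt (fun _ => hE g) f).
- by case=> [[] f].
- case=> [[] f]; rewrite /fe /= /fl_inc /= -map_comp -[LHS]map_id.
  apply/eq_in_map => v _ /=.
  case: (boolP (v \in hsrc g)) => v_src; last by rewrite (@fl_vert_nsrc _ G tt v v_src).
  rewrite (@fl_vert_src _ G tt v (Ordinal (index_src_lt p v_src)) v_src) /=.
  by rewrite nth_enum_index src_at_index.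
- by rewrite /flatten /= -map_comp.
Qed.
End OneEdge.

Lemma hresrc_enum (S : rset) (g : hg S) (n : nat) (p : harity g = n) :
  hresrc (enum_uniq 'I_n) p = g.
Proof.
have := map_src_at_enum p; case: g p => V E l i s ? ? ? p /= src_enum.
exact: HG_eq.
Qed.

Lemma flatten_unit (S : rset) (g : hg S) : iso eq (flatten (@hunit (HR S) g)) g.
Proof.
have -> : @hunit (HR S) g =
    relabel (const_rmap (erefl (harity g))) (one_edge (enum_uniq 'I_(harity g))).
  exact: HG_eq.
by have := flatten_one_edge (enum_uniq 'I_(harity g)) (erefl (harity g)); rewrite hresrc_enum.
Qed.

Lemma hforget_resrc (S : rset) k n (f : 'I_k -> 'I_n) (f_inj : injective f)
    (g : hg S) (p : harity g = n) :
  hforget f_inj p = hresrc (etrans (map_inj_uniq f_inj _) (enum_uniq 'I_k)) p.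
Proof.
apply: HG_eq => //; rewrite -map_comp; apply/eq_map => i.
exact: nth_lt_irr.
Qed.

Lemma harity_flatten (S : rset) (G : hg (HR S)) : harity (flatten G) = harity G.
Proof. exact: size_map. Qed.

Definition flattenR (S : rset) : rmap (HR (HR S)) (HR S) :=
  @RMap (HR (HR S)) (HR S) (@flatten S) (@harity_flatten S).

Lemma mem_map_inl (T U : eqType) (s : seq T) (v : T) :
  (@inl T U v \in map inl s) = (v \in s).
Proof. exact/mem_map/inl_inj. Qed.

Lemma mem_map_inr (T U : eqType) (s : seq T) (u : U) : (@inr T U u \in map inl s) = false.
Proof. by apply/mapP => -[]. Qed.

(* Both sides have a vertex for every vertex of [K], for every non-source of
   a label of [K], and for every non-source of a label of a label of [K]. *)
Section FlattenAssoc.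
Variables (S : rset) (K : hg (HR (HR S))).
Let K' := relabel (flattenR S) K.
Let FK := flatten K.

Lemma outer_nsrcP (t : {E : hE K & nonsrc (@hlab _ K E)}) :
  (inl (val (tagged t)) : hV (flatten (hlab (tag t)))) \notin hsrc (flatten (hlab (tag t))).
Proof. by rewrite /= mem_map_inl (valP (tagged t)). Qed.

Definition outer_nsrc (t : {E : hE K & nonsrc (@hlab _ K E)}) :
    {E : hE K' & nonsrc (@hlab _ K' E)} :=
  Tagged (fun E : hE K' => nonsrc (@hlab _ K' E))
    (exist _ (inl (val (tagged t))) (outer_nsrcP t) : nonsrc (@hlab _ K' (tag t))).

Lemma inner_nsrcP (t : {Ee : hE FK & nonsrc (@hlab _ FK Ee)}) :
  (inr (Tagged (fun e => nonsrc (@hlab _ (hlab (tag (tag t))) e)) (tagged t))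
     : hV (flatten (hlab (tag (tag t))))) \notin hsrc (flatten (hlab (tag (tag t)))).
Proof. by rewrite /= mem_map_inr. Qed.

Definition inner_nsrc (t : {Ee : hE FK & nonsrc (@hlab _ FK Ee)}) :
    {E : hE K' & nonsrc (@hlab _ K' E)} :=
  Tagged (fun E : hE K' => nonsrc (@hlab _ K' E))
    (exist _ (inr (Tagged (fun e => nonsrc (@hlab _ (hlab (tag (tag t))) e)) (tagged t)))
       (inner_nsrcP t) : nonsrc (@hlab _ K' (tag (tag t)))).

Definition assoc_vert (x : hV (flatten FK)) : hV (flatten K') :=
  match x with
  | inl (inl v) => inl v
  | inl (inr t) => inr (outer_nsrc t)
  | inr t => inr (inner_nsrc t)
  end.

Definition assoc_edge (x : hE (flatten FK)) : hE (flatten K') :=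
  Tagged (fun E : hE K' => hE (@hlab _ K' E))
    (Tagged (fun e => hE (@hlab _ (hlab (tag (tag x))) e)) (tagged x)
      : hE (flatten (hlab (tag (tag x))))).

Lemma assoc_vert_inj : injective assoc_vert.
Proof.
case=> [[v|[E [u u_nsrc]]]|[[E e] [u u_nsrc]]]
       [[v'|[E' [u' u_nsrc']]]|[[E' e'] [u' u_nsrc']]] //= => [[->] //| |].
- move=> eq_v; have eq_t := inr_inj eq_v; have /= eq_E := Tagged_inj_tag eq_t; subst E'.
  have /= eq_u := inl_inj (congr1 val (Tagged_inj eq_t)); subst u'.
  by rewrite (bool_irrelevance u_nsrc u_nsrc').
- move=> eq_v; have eq_t := inr_inj eq_v; have /= eq_E := Tagged_inj_tag eq_t; subst E'.
  have eq_t' := inr_inj (congr1 val (Tagged_inj eq_t)).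
  have /= eq_e := Tagged_inj_tag eq_t'; subst e'.
  have /= eq_u := congr1 val (Tagged_inj eq_t'); subst u'.
  by rewrite (bool_irrelevance u_nsrc u_nsrc').
Qed.

Lemma assoc_vert_surj y : exists x, assoc_vert x = y.
Proof.
case: y => [v|[E [[x|[e u]] x_nsrc]]]; first by exists (inl (inl v)).
  have x_nsrc' : x \notin hsrc (@hlab _ K E) by move: x_nsrc; rewrite /= mem_map_inl.
  exists (inl (inr (Tagged (fun E => nonsrc (@hlab _ K E)) (exist _ x x_nsrc' : nonsrc _)))).
  by rewrite /= /outer_nsrc; congr (inr (Tagged _ _)); apply: val_inj.
exists (inr (Tagged (fun Ee : hE FK => nonsrc (@hlab _ FK Ee))
          (u : nonsrc (@hlab _ FK (Tagged (fun e => hE (@hlab _ K e)) e))))).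
by rewrite /= /inner_nsrc; congr (inr (Tagged _ _)); apply: val_inj.
Qed.

Lemma assoc_edge_inj : injective assoc_edge.
Proof.
case=> [[E e] f] [[E' e'] f'] /= eq_t.
have /= eq_E := Tagged_inj_tag eq_t; subst E'.
have eq_t' := Tagged_inj eq_t; have /= eq_e := Tagged_inj_tag eq_t'; subst e'.
by have /= -> := Tagged_inj eq_t'.
Qed.

Lemma assoc_edge_surj y : exists x, assoc_edge x = y.
Proof.
case: y => [E [e f]].
by exists (Tagged (fun Ee : hE FK => hE (@hlab _ FK Ee))
          (f : hE (@hlab _ FK (Tagged (fun e => hE (@hlab _ K e)) e)))).
Qed.

Lemma assoc_inc x : hinc (assoc_edge x) = map assoc_vert (hinc x).
Proof.
case: x => [[E e] f]; rewrite /= /fl_inc /= -!map_comp; apply/eq_in_map => v _ /=.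
case: (boolP (v \in hsrc (hlab e))) => v_src; last first.
  rewrite (fl_vert_nsrc v_src).
  rewrite (@fl_vert_nsrc _ FK (Tagged (fun E => hE (@hlab _ K E)) e) v v_src) /=.
  have v_nsrc' : (inr (Tagged (fun e => nonsrc (@hlab _ (hlab E) e)) (exist _ v v_src : nonsrc _))
     : hV (@hlab _ K' E)) \notin hsrc (@hlab _ K' E) by rewrite /= mem_map_inr.
  rewrite (@fl_vert_nsrc _ K' E _ v_nsrc') /=.
  by congr (inr (Tagged _ _)); apply: val_inj.
have w0 : hV (hlab E) := nth_lt (attach_lt (hinc_size e) v_src).
rewrite (fl_vert_src w0 v_src).
rewrite (@fl_vert_src _ FK (Tagged (fun E => hE (@hlab _ K E)) e) v (fl_vert w0) v_src).
rewrite /= /fl_inc /= (nth_map w0); last by rewrite hinc_size /= /harity index_mem.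
set x := nth w0 (hinc e) _.
case: (boolP (x \in hsrc (hlab E))) => x_src; last first.
  have x_nsrc' : (inl x : hV (@hlab _ K' E)) \notin hsrc (@hlab _ K' E).
    by rewrite /= mem_map_inl.
  rewrite (@fl_vert_nsrc _ K' E _ x_nsrc') (fl_vert_nsrc x_src) /=.
  by congr (inr (Tagged _ _)); apply: val_inj.
have x_src' : (inl x : hV (@hlab _ K' E)) \in hsrc (@hlab _ K' E) by rewrite /= mem_map_inl.
have w1 : hV K := nth_lt (attach_lt (hinc_size E) x_src).
rewrite (@fl_vert_src _ K' E _ w1 x_src') (fl_vert_src w1 x_src) /=.
by rewrite (index_map inl_inj).
Qed.

Lemma flatten_assoc : iso eq (flatten (flatten K)) (flatten (relabel (flattenR S) K)).
Proof.
apply: (@iso_of_inj_surj _ eq (flatten FK) (flatten K') assoc_vert assoc_edge).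
- exact: assoc_vert_inj.
- exact: assoc_vert_surj.
- exact: assoc_edge_inj.
- exact: assoc_edge_surj.
- by case=> [[E e] f].
- exact: assoc_inc.
- by rewrite /flatten /= -!map_comp.
Qed.
End FlattenAssoc.

(** * Congruences, kernels and quotient algebras *)

Section Hequiv.
Variables (S : rset) (R : hg S -> hg S -> Prop) (R_eqv : hequiv R).

Lemma hequiv_refl g : R g g.
Proof. by case: R_eqv. Qed.

Lemma hequiv_sym g h : R g h -> R h g.
Proof. by case: R_eqv => _ Rsym _ _ _; apply: Rsym. Qed.

Lemma hequiv_trans g h k : R g h -> R h k -> R g k.
Proof. by case: R_eqv => _ _ Rtrans _ _; apply: Rtrans. Qed.

Lemma hequiv_arity g h : R g h -> harity g = harity h.
Proof. by case: R_eqv => _ _ _ Rar _; apply: Rar. Qed.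

Lemma hequiv_iso g h : iso eq g h -> R g h.
Proof. by case: R_eqv => _ _ _ _ Riso; apply: Riso. Qed.

Lemma hequiv_iso_lr g g' h h' : iso eq g' g -> iso eq h' h -> R g' h' -> R g h.
Proof.
move=> /hequiv_iso g'g /hequiv_iso h'h g'h'.
exact: hequiv_trans (hequiv_trans (hequiv_sym g'g) g'h') h'h.
Qed.
End Hequiv.

(* Polynomial operations are the special case where the labels of [G] are
   constants or variables. *)
Definition flatten_compatible (S : rset) (R : hg S -> hg S -> Prop) : Prop :=
  forall (B : rset) (G : hg B) (f1 f2 : rmap B (HR S)),
    (forall e : hE G, R (f1 (hlab e)) (f2 (hlab e))) ->
    R (flatten (relabel f1 G)) (flatten (relabel f2 G)).

Lemma congruenceP (S : rset) (R : hg S -> hg S -> Prop) :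
  congruence R <-> hequiv R /\ flatten_compatible R.
Proof.
split=> -[R_eqv R_comp]; split=> //; last first.
  move=> X t eta1 eta2 Reta; apply: R_comp => e.
  by case: (hlab e) => [g|x] /=; [apply: hequiv_refl | apply: Reta].
move=> B G f1 f2 Rf.
pose X := @RSet (hE G) (fun e => rar (hlab e)).
pose eta (f : rmap B (HR S)) := @RMap X (HR S) (fun e => f (hlab e)) (fun e => rfunP f _).
pose t : hg (sumR (HR S) X) := @HG (sumR (HR S) X) (hV G) (hE G) inr
  (@hinc _ G) (hsrc G) (@hinc_size _ G) (@hinc_uniq _ G) (hsrc_uniq G).
have polyop_eta f : polyop t (eta f) = flatten (relabel f G).
  by rewrite /polyop; congr flatten; apply: HG_eq.
by rewrite -!polyop_eta; apply: R_comp.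
Qed.

Section Kernel.
Variables (S A : rset) (pi : rmap (HR A) A) (h : rmap (HR S) A).

Lemma kernel_congruence : is_Hhom pi h -> congruence (fun g g' => h g = h g').
Proof.
case=> h_iso h_flatten; apply/congruenceP; split.
  split=> [//|g g' -> //|g1 g2 g3 -> -> //|g g' hgg'|]; last exact: h_iso.
  by have := rfunP h g'; rewrite -hgg' rfunP.
move=> B G f1 f2 hf; rewrite !h_flatten !relabel_comp; congr (pi _).
exact: relabel_ext.
Qed.

Lemma kernel_finite_index :
  finite_on_arities A -> finite_index (fun g g' => h g = h g').
Proof.
move=> A_fin n; have [m [enm enmP]] := A_fin n.
pose pre i := epsilon (inhabits (hempty S)) (fun g => h g = enm i).
exists m, pre => g g_ar.
have [i enm_i] := enmP (h g) (etrans (rfunP h g) g_ar); exists i.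
by rewrite (epsilon_spec _ (fun g => h g = enm i) (ex_intro _ g (esym enm_i))).
Qed.
End Kernel.

Section Quotient.
Variables (S : rset) (R : hg S -> hg S -> Prop) (R_cong : congruence R).
Let R_eqv : hequiv R := proj1 (proj1 (congruenceP R) R_cong).
Let R_flatten : flatten_compatible R := proj2 (proj1 (congruenceP R) R_cong).

Definition qclass_type := {P : hg S -> Prop | exists g, P = R g}.

Definition qrepr (a : qclass_type) : hg S :=
  sval (constructive_indefinite_description _ (proj2_sig a)).

Lemma qreprP a : sval a = R (qrepr a).
Proof. by rewrite /qrepr; case: constructive_indefinite_description. Qed.

Definition quot : rset := @RSet qclass_type (fun a => harity (qrepr a)).

Definition qclass (g : hg S) : quot := exist _ (R g) (ex_intro _ g erefl).

Lemma eq_qclass g g' : qclass g = qclass g' <-> R g g'.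
Proof.
split=> [/(congr1 sval) /= -> | Rgg']; first exact: hequiv_refl.
apply: eq_sig_hprop => [P p q|/=]; first exact: proof_irrelevance.
apply: functional_extensionality => x; apply: propositional_extensionality.
by split=> [/(hequiv_trans R_eqv (hequiv_sym R_eqv Rgg'))|/(hequiv_trans R_eqv Rgg')].
Qed.

Lemma qreprK a : qclass (qrepr a) = a.
Proof.
by apply: eq_sig_hprop => [P p q|/=]; [exact: proof_irrelevance | rewrite qreprP].
Qed.

Lemma qclassK g : R (qrepr (qclass g)) g.
Proof. by apply/eq_qclass; rewrite qreprK. Qed.

Definition qreprR : rmap quot (HR S) := @RMap quot (HR S) qrepr (fun _ => erefl).

Lemma harity_qclass g : rar (qclass g) = harity g.
Proof. exact (hequiv_arity R_eqv (qclassK g)). Qed.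

Definition qclassR : rmap (HR S) quot := @RMap (HR S) quot qclass harity_qclass.

Lemma harity_qmul (G : HR quot) : rar (qclass (flatten (relabel qreprR G))) = rar G.
Proof. by rewrite harity_qclass harity_flatten. Qed.

Definition qmul : rmap (HR quot) quot :=
  @RMap (HR quot) quot (fun G => qclass (flatten (relabel qreprR G))) harity_qmul.

Lemma qmul_Halg : is_Halg qmul.
Proof.
split=> [G G' GG'|a|G].
- apply/eq_qclass/(hequiv_iso R_eqv)/flatten_iso.
  by apply: iso_mono (relabel_iso _ GG') => a _ <-; apply: iso_refl.
- rewrite -[RHS]qreprK; apply/eq_qclass/(hequiv_iso R_eqv).
  have -> : relabel qreprR (@hunit quot a) = @hunit (HR S) (qrepr a) by apply: HG_eq.
  exact: flatten_unit.
- rewrite /= relabel_flatten; apply/eq_qclass.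
  apply: hequiv_trans R_eqv _ _ _ _ (hequiv_sym R_eqv (hequiv_iso R_eqv (flatten_assoc _))).
  by rewrite !relabel_comp; apply: R_flatten => e; apply: qclassK.
Qed.

Lemma qclass_hom : is_Hhom qmul qclassR.
Proof.
split=> [g g' gg'|G]; first exact/eq_qclass/(hequiv_iso R_eqv).
apply/eq_qclass; rewrite -{1}(relabel_id G) relabel_comp.
by apply: R_flatten => e; exact (hequiv_sym R_eqv (qclassK (hlab e))).
Qed.

Lemma quot_finite : finite_index R -> finite_on_arities quot.
Proof.
move=> R_fin n; have [m [rep repP]] := R_fin n.
exists m, (fun i => qclass (rep i)) => a a_ar.
have [i Ri] := repP (qrepr a) a_ar; exists i.
by rewrite -[RHS]qreprK; apply/eq_qclass/(hequiv_sym R_eqv).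
Qed.

Lemma quot_recognises (L : hg S -> Prop) :
  (forall g, L g -> harity g = 0) -> saturates R L -> recognised_by_alg L qmul.
Proof.
move=> L0 L_sat; exists qclassR; split; first exact: qclass_hom.
exists (fun a => exists2 g, L g & qclass g = a) => g.
split=> [Lg|[[g' Lg' /eq_qclass Rg'g] _]]; last exact: L_sat Lg'.
by split; [exists g | apply: L0].
Qed.
End Quotient.

(** * HR-operations as polynomial operations *)

Section AddsrcEdge.
Variable n : nat.

Lemma size_map_Some_enum : size (map Some (enum 'I_n)) = n.
Proof. by rewrite size_map size_enum_ord. Qed.

Lemma map_Some_enum_uniq : uniq (map Some (enum 'I_n)).
Proof. by rewrite map_inj_uniq ?enum_uniq // => ? ? []. Qed.

Lemma rcons_map_Some_enum_uniq : uniq (rcons (map Some (enum 'I_n)) None).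
Proof. by rewrite rcons_uniq map_Some_enum_uniq andbT; apply/mapP => -[]. Qed.

Definition addsrc_edge : hg (unit_rset n) :=
  @HG (unit_rset n) (option 'I_n : finType) unit (fun _ => tt)
    (fun _ => map Some (enum 'I_n)) (rcons (map Some (enum 'I_n)) None)
    (fun _ => size_map_Some_enum) (fun _ => map_Some_enum_uniq) rcons_map_Some_enum_uniq.

Variables (S : rset) (g : hg S) (p : harity g = n).

Lemma flatten_addsrc_edge : iso eq (flatten (relabel (const_rmap p) addsrc_edge)) (haddsrc g).
Proof.
set G := relabel (const_rmap p) addsrc_edge.
pose fv (x : hV (flatten G)) : hV (haddsrc g) :=
  match x with
  | inl (Some i) => Some (src_at p i)
  | inl None => None
  | inr t => Some (val (tagged t))
  end.
pose fe (t : hE (flatten G)) : hE (haddsrc g) := tagged t.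
apply: (@iso_of_inj_surj _ eq _ (haddsrc g) fv fe).
- case=> [[i|]|[[] [u u_nsrc]]] [[j|]|[[] [w w_nsrc]]] //=.
  + by case=> /src_at_inj ->.
  + by case=> E; exfalso; move: w_nsrc; rewrite -E mem_src_at.
  + by case=> E; exfalso; move: u_nsrc; rewrite E mem_src_at.
  + by case=> E; subst w; congr (inr (Tagged _ _)); apply: val_inj.
- case=> [v|]; last by exists (inl None).
  case: (boolP (v \in hsrc g)) => v_src.
    by exists (inl (Some (Ordinal (index_src_lt p v_src)))); rewrite /= src_at_index.
  by exists (inr (@Tagged _ tt (fun _ => nonsrc g) (exist _ v v_src : nonsrc g))).
- by case=> [[] f] [[] f'] /= E; subst f'.
- by move=> f; exists (@Tagged _ tt (fun _ => hE g) f).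
- by case=> [[] f].
- case=> [[] f]; rewrite /fe /= /fl_inc /= -!map_comp.
  apply/eq_in_map => v _ /=.
  case: (boolP (v \in hsrc g)) => v_src; last by rewrite (@fl_vert_nsrc _ G tt v v_src).
  rewrite (@fl_vert_src _ G tt v (Some (Ordinal (index_src_lt p v_src))) v_src) /=.
  rewrite (nth_map (Ordinal (index_src_lt p v_src))); last first.
    by rewrite size_enum_ord index_src_lt.
  by rewrite nth_enum_index src_at_index.
- rewrite /flatten /= !map_rcons; congr rcons.
  by rewrite -[in LHS](map_src_at_enum p) -!map_comp.
Qed.
End AddsrcEdge.

Definition bool_rset (n : nat) : rset := @RSet bool (fun _ => n).

Definition pair_rmap (S : rset) (g h : hg S) (n : nat) (pg : harity g = n)
    (ph : harity h = n) : rmap (bool_rset n) (HR S) :=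
  @RMap (bool_rset n) (HR S) (fun b => if b then g else h)
    (fun b => if b as b return harity (if b then g else h) = n then pg else ph).

Definition par_edges (n : nat) : hg (bool_rset n) :=
  @HG (bool_rset n) 'I_n bool (fun b => b) (fun _ => enum 'I_n) (enum 'I_n)
    (fun _ => size_enum_ord n) (fun _ => enum_uniq _) (enum_uniq _).

Section ParEdges.
Variables (S : rset) (g h : hg S) (n : nat) (pg : harity g = n) (ph : harity h = n).
Variable (p : harity g = harity h).

Lemma flatten_par_edges :
  iso eq (flatten (relabel (pair_rmap pg ph) (par_edges n))) (hpar p).
Proof.
set G := relabel (pair_rmap pg ph) (par_edges n).
pose fv (x : hV (flatten G)) : hV (hpar p) :=
  match x with
  | inl i => inl (src_at pg i)
  | inr t => (if tag t as b return nonsrc (if b then g else h) -> hV (hpar p)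
              then fun u => inl (val u) else fun u => inr u) (tagged t)
  end.
pose fe (t : hE (flatten G)) : hE (hpar p) :=
  (if tag t as b return hE (if b then g else h) -> hE (hpar p)
   then fun f => inl f else fun f => inr f) (tagged t).
apply: (@iso_of_inj_surj _ eq _ (hpar p) fv fe).
- case=> [i|[[] [u u_nsrc]]] [j|[[] [w w_nsrc]]] //=.
  + by case=> /src_at_inj ->.
  + by case=> E; exfalso; move: w_nsrc; rewrite -E mem_src_at.
  + by case=> E; exfalso; move: u_nsrc; rewrite E mem_src_at.
  + by case=> E; subst w; congr (inr (Tagged _ _)); apply: val_inj.
  + by case=> E; subst w; congr (inr (Tagged _ _)); apply: val_inj.
- case=> [v|u]; last first.
    by exists (inr (@Tagged _ false (fun b => nonsrc (if b then g else h)) u)).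
  case: (boolP (v \in hsrc g)) => v_src.
    by exists (inl (Ordinal (index_src_lt pg v_src))); rewrite /= src_at_index.
  by exists (inr (@Tagged _ true (fun b => nonsrc (if b then g else h))
                   (exist _ v v_src : nonsrc g))).
- by case=> [[] f] [[] f'] //= [] E; subst f'.
- case=> f; first by exists (@Tagged _ true (fun b => hE (if b then g else h)) f).
  by exists (@Tagged _ false (fun b => hE (if b then g else h)) f).
- by case=> [[] f].
- case=> [[] f]; rewrite /fe /= /fl_inc /= -!map_comp; apply/eq_in_map => v _ /=.
  + case: (boolP (v \in hsrc g)) => v_src; last by rewrite (@fl_vert_nsrc _ G true v v_src).
    rewrite (@fl_vert_src _ G true v (Ordinal (index_src_lt pg v_src)) v_src) /=.
    by rewrite nth_enum_index src_at_index.
  + case: (boolP (v \in hsrc h)) => v_src; last first.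
      by rewrite (@fl_vert_nsrc _ G false v v_src) (attach_nsrc _ v_src).
    rewrite (@fl_vert_src _ G false v (Ordinal (index_src_lt ph v_src)) v_src) /=.
    have w0 := src_at pg (Ordinal (index_src_lt ph v_src)).
    by rewrite nth_enum_index (attach_src _ w0 v_src) (src_atE _ w0).
- by rewrite /flatten /= -[in LHS](map_src_at_enum pg) -!map_comp.
Qed.
End ParEdges.

Section CongruenceHR.
Variables (S : rset) (R : hg S -> hg S -> Prop) (R_cong : congruence R).
Let R_eqv : hequiv R := proj1 (proj1 (congruenceP R) R_cong).
Let R_flatten : flatten_compatible R := proj2 (proj1 (congruenceP R) R_cong).

Lemma congruence_forget k n (f : 'I_k -> 'I_n) (f_inj : injective f) (g1 g2 : hg S)
    (p1 : harity g1 = n) (p2 : harity g2 = n) :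
  R g1 g2 -> R (hforget f_inj p1) (hforget f_inj p2).
Proof.
move=> R12; rewrite !hforget_resrc.
apply: (hequiv_iso_lr R_eqv (flatten_one_edge _ p1) (flatten_one_edge _ p2)).
by apply: R_flatten => e; exact R12.
Qed.

Lemma congruence_addsrc g1 g2 : R g1 g2 -> R (haddsrc g1) (haddsrc g2).
Proof.
move=> R12; have p2 := esym (hequiv_arity R_eqv R12).
apply: (hequiv_iso_lr R_eqv (flatten_addsrc_edge (erefl (harity g1)))
  (flatten_addsrc_edge p2)).
by apply: R_flatten => e; exact R12.
Qed.

Lemma congruence_par (g1 g2 h1 h2 : hg S) (p1 : harity g1 = harity h1)
    (p2 : harity g2 = harity h2) :
  R g1 g2 -> R h1 h2 -> R (hpar p1) (hpar p2).
Proof.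
move=> Rg Rh; have pg2 := esym (hequiv_arity R_eqv Rg).
have ph1 := esym p1; have ph2 := etrans (esym (hequiv_arity R_eqv Rh)) ph1.
apply: (hequiv_iso_lr R_eqv (flatten_par_edges (erefl (harity g1)) ph1 p1)
  (flatten_par_edges pg2 ph2 p2)).
by apply: R_flatten => -[]; [exact: Rg | exact: Rh].
Qed.

Lemma congruence_HR_compatible : HR_compatible R.
Proof.
split=> //; [exact: congruence_par | exact: congruence_addsrc | exact: congruence_forget].
Qed.
End CongruenceHR.

(** * HR-compatible equivalences are congruences *)

Section Pad.
Variables (S : rset) (j : nat) (g : hg S).

Definition pad_src : seq (hV g + 'I_j) := map inl (hsrc g) ++ map inr (enum 'I_j).

Lemma pad_inc_size (e : hE g) : size (map (@inl _ 'I_j) (hinc e)) = rar (hlab e).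
Proof. by rewrite size_map hinc_size. Qed.

Lemma pad_inc_uniq (e : hE g) : uniq (map (@inl _ 'I_j) (hinc e)).
Proof. by rewrite (map_inj_uniq inl_inj) hinc_uniq. Qed.

Lemma pad_src_uniq : uniq pad_src.
Proof.
rewrite cat_uniq (map_inj_uniq inl_inj) (map_inj_uniq inr_inj) hsrc_uniq enum_uniq andbT /=.
by apply/hasP => -[x /mapP [? ? ->]]; rewrite mem_map_inr.
Qed.

Definition hpad : hg S :=
  @HG S (hV g + 'I_j)%type (hE g) (@hlab _ g) (fun e => map inl (hinc e)) pad_src
    pad_inc_size pad_inc_uniq pad_src_uniq.

Lemma harity_pad : harity hpad = harity g + j.
Proof. by rewrite /harity /= /pad_src size_cat !size_map -enumT size_enum_ord. Qed.

Lemma mem_pad_src_inl v : (inl v \in pad_src) = (v \in hsrc g).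
Proof. by rewrite mem_cat mem_map_inl; case: (v \in hsrc g) => //=; apply/mapP => -[]. Qed.

Lemma mem_pad_src_inr i : inr i \in pad_src.
Proof. by rewrite mem_cat (mem_map inr_inj) mem_enum orbT. Qed.

Lemma index_pad_src_inl v : v \in hsrc g -> index (inl v) pad_src = index v (hsrc g).
Proof. by move=> v_src; rewrite index_cat mem_map_inl v_src (index_map inl_inj). Qed.

Definition pad_nsrc (u : nonsrc hpad) : nonsrc g :=
  match val u as x return x \notin pad_src -> nonsrc g with
  | inl v => fun v_nsrc => exist _ v (etrans (congr1 negb (esym (mem_pad_src_inl v))) v_nsrc)
  | inr i => fun i_nsrc =>
      False_rect _ (Bool.diff_false_true (etrans (esym (negbTE i_nsrc)) (mem_pad_src_inr i)))
  end (valP u).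

Lemma pad_nsrcE (u : nonsrc hpad) : inl (val (pad_nsrc u)) = val u.
Proof. by case: u => [[v|i] u_nsrc] //; exfalso; move: u_nsrc; rewrite mem_pad_src_inr. Qed.

Lemma pad_nsrc_inj : injective pad_nsrc.
Proof. by move=> u w uw; apply: val_inj; rewrite -!pad_nsrcE uw. Qed.

Definition nsrc_pad (u : nonsrc g) : nonsrc hpad :=
  exist _ (inl (val u)) (etrans (congr1 negb (mem_pad_src_inl (val u))) (valP u)).

Lemma nsrc_padK : cancel nsrc_pad pad_nsrc.
Proof. by move=> u; apply: val_inj. Qed.
End Pad.

Lemma hpad0 (S : rset) (g : hg S) : iso eq g (hpad 0 g).
Proof.
apply: (@iso_of_inj_surj _ eq _ (hpad 0 g) inl id) => //.
- exact: inl_inj.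
- by case=> [v|[]]; [exists v|].
- by move=> y; exists y.
- by rewrite /= /pad_src enum_ord0 cats0.
Qed.

Lemma haddsrc_pad (S : rset) (j : nat) (g : hg S) : iso eq (haddsrc (hpad j g)) (hpad j.+1 g).
Proof.
pose fv (x : hV (haddsrc (hpad j g))) : hV (hpad j.+1 g) :=
  match x with
  | Some (inl v) => inl v
  | Some (inr i) => inr (widen_ord (leqnSn j) i)
  | None => inr ord_max
  end.
apply: (@iso_of_inj_surj _ eq _ (hpad j.+1 g) fv id) => //.
- case=> [[v|i]|] [[v'|i']|] //= [] => [->|/val_inj ->|ij|ij] //.
    by move: (ltn_ord i); rewrite ij ltnn.
  by move: (ltn_ord i'); rewrite -ij ltnn.
- case=> [v|i]; first by exists (Some (inl v)).
  case: (unliftP ord_max i) => [i'|] ->; last by exists None.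
  exists (Some (inr i')); congr inr; apply: val_inj.
  by rewrite /= /bump leqNgt ltn_ord.
- by move=> y; exists y.
- by move=> e /=; rewrite -!map_comp.
rewrite /= /pad_src map_rcons map_cat -!map_comp -!enumT enum_ordSr.
by rewrite map_cat -!map_comp rcons_cat map_rcons -map_comp.
Qed.

(* Removing the hyperedge [e0] of [G]: the incidence list of [e0] is put in
   front of the remaining sources, so that the label of [e0], padded with the
   remaining sources, can be put in parallel with the flattening of the rest. *)
Section DeleteEdge.
Variables (B : rset) (G : hg B) (e0 : hE G).

Definition del_rest : seq (hV G) := [seq v <- hsrc G | v \notin hinc e0].

Definition del_src : seq (hV G) := hinc e0 ++ del_rest.

Lemma del_src_uniq : uniq del_src.
Proof.
rewrite cat_uniq hinc_uniq filter_uniq ?hsrc_uniq // andbT /=.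
by apply/hasP => -[x]; rewrite mem_filter => /andP [/negbTE ->].
Qed.

Lemma mem_del_src v : v \in hsrc G -> v \in del_src.
Proof. by move=> v_src; rewrite mem_cat mem_filter v_src andbT; case: (v \in hinc e0). Qed.

Definition hdel : hg B :=
  @HG B (hV G) ({e | e != e0} : finType) (fun e => hlab (val e)) (fun e => hinc (val e))
    del_src (fun e => hinc_size (val e)) (fun e => hinc_uniq (val e)) del_src_uniq.

Lemma card_hdel : #|hE hdel| = #|hE G|.-1.
Proof. by rewrite card_sig cardC1. Qed.

Lemma mem_del_src_nth (i : 'I_(size (hsrc G))) : nth_lt (ltn_ord i) \in del_src.
Proof. by apply: mem_del_src; rewrite (nth_ltE _ (nth_lt (ltn_ord i))) mem_nth. Qed.

Lemma del_pos_lt (i : 'I_(size (hsrc G))) :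
  index (nth_lt (ltn_ord i)) del_src < size del_src.
Proof. by rewrite index_mem mem_del_src_nth. Qed.

Definition del_pos (i : 'I_(size (hsrc G))) : 'I_(size del_src) := Ordinal (del_pos_lt i).

Lemma del_pos_inj : injective del_pos.
Proof.
move=> i i'; have x0 : hV G := nth_lt (ltn_ord i).
move=> [] /(congr1 (nth x0 del_src)).
rewrite nth_index ?mem_del_src_nth // nth_index ?mem_del_src_nth //.
rewrite !(nth_ltE _ x0) => /eqP.
by rewrite nth_uniq ?hsrc_uniq // => /eqP ii'; apply: val_inj.
Qed.

Variables (S : rset) (f : rmap B (HR S)).

Lemma harity_del_pad :
  harity (flatten (relabel f hdel)) = harity (hpad (size del_rest) (f (hlab e0))).
Proof. by rewrite harity_pad /harity /= size_map size_cat hinc_size -(rfunP f). Qed.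

Lemma harity_del_par : harity (hpar harity_del_pad) = size del_src.
Proof. by rewrite /harity /= !size_map. Qed.

Let FG := relabel f G.
Let P := hforget del_pos_inj harity_del_par.

Definition del_vert (x : hV P) : hV (flatten FG) :=
  match x with
  | inl (inl v) => inl v
  | inl (inr t) => inr (Tagged (fun e => nonsrc (@hlab _ FG e))
                               (tagged t : nonsrc (f (hlab (val (tag t))))))
  | inr u => inr (Tagged (fun e => nonsrc (@hlab _ FG e)) (pad_nsrc u : nonsrc (f (hlab e0))))
  end.

Definition del_edge (x : hE P) : hE (flatten FG) :=
  match x with
  | inl t => Tagged (fun e => hE (@hlab _ FG e)) (tagged t : hE (f (hlab (val (tag t)))))
  | inr h => Tagged (fun e => hE (@hlab _ FG e)) (h : hE (f (hlab e0)))
  end.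

Lemma del_vert_inj : injective del_vert.
Proof.
case=> [[v|[e u]]|u] [[v'|[e' u']]|u'] //= => [[->] //||||].
- move=> eq_v; have eq_t := inr_inj eq_v; have /= eq_e := val_inj (Tagged_inj_tag eq_t).
  by subst e'; rewrite (Tagged_inj eq_t).
- move=> eq_v; have /= eq_e := Tagged_inj_tag (inr_inj eq_v).
  by case/eqP: (valP e).
- move=> eq_v; have /= eq_e := Tagged_inj_tag (inr_inj eq_v).
  by case/eqP: (valP e'); apply: esym.
- by move=> eq_v; rewrite (pad_nsrc_inj (Tagged_inj (inr_inj eq_v))).
Qed.

Lemma del_vert_surj y : exists x, del_vert x = y.
Proof.
case: y => [v|[e u]]; first by exists (inl (inl v)).
case: (eqVneq e e0) => [eq_e|ne_e].
  by subst e; exists (inr (nsrc_pad _ u)); rewrite /= nsrc_padK.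
by exists (inl (inr (Tagged (fun e : {e | e != e0} => nonsrc (f (hlab (val e))))
                         (u : nonsrc (f (hlab (val (exist _ e ne_e : {e | e != e0})))))))).
Qed.

Lemma del_edge_inj : injective del_edge.
Proof.
case=> [[e h]|h] [[e' h']|h'] //= eq_t; have /= eq_e := Tagged_inj_tag eq_t.
- by have eq_e' := val_inj eq_e; subst e'; rewrite (Tagged_inj eq_t).
- by case/eqP: (valP e).
- by case/eqP: (valP e'); apply: esym.
- by rewrite (Tagged_inj eq_t).
Qed.

Lemma del_edge_surj y : exists x, del_edge x = y.
Proof.
case: y => e h; case: (eqVneq e e0) => [eq_e|ne_e]; first by subst e; exists (inr h).
by exists (inl (Tagged (fun e : {e | e != e0} => hE (f (hlab (val e))))
                 (h : hE (f (hlab (val (exist _ e ne_e : {e | e != e0}))))))).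
Qed.

Lemma del_inc x : hinc (del_edge x) = map del_vert (hinc x).
Proof.
case: x => [[e h]|h]; rewrite /= /fl_inc /= -!map_comp; apply/eq_in_map => v _ /=.
  case: (boolP (v \in hsrc (f (hlab (val e))))) => v_src; last first.
    rewrite (@fl_vert_nsrc _ FG (val e) v v_src).
    rewrite (@fl_vert_nsrc _ (relabel f hdel) e v v_src) /=.
    by congr (inr (Tagged _ _)); apply: val_inj.
  have w0 : hV G := nth_lt (attach_lt (@hinc_size _ FG (val e)) v_src).
  rewrite (@fl_vert_src _ FG (val e) v w0 v_src).
  by rewrite (@fl_vert_src _ (relabel f hdel) e v w0 v_src).
case: (boolP (v \in hsrc (f (hlab e0)))) => v_src; last first.
  have v_nsrc' : (inl v : hV (hpad (size del_rest) (f (hlab e0)))) \notin pad_src _ _.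
    by rewrite mem_pad_src_inl.
  rewrite (@fl_vert_nsrc _ FG e0 v v_src) (attach_nsrc _ v_nsrc') /=.
  by congr (inr (Tagged _ _)); apply: val_inj.
have w0 : hV G := nth_lt (attach_lt (@hinc_size _ FG e0) v_src).
have v_src' : (inl v : hV (hpad (size del_rest) (f (hlab e0)))) \in pad_src _ _.
  by rewrite mem_pad_src_inl.
rewrite (@fl_vert_src _ FG e0 v w0 v_src).
rewrite (attach_src _ (inl w0 : hV (flatten (relabel f hdel))) v_src').
have v_lt : index v (hsrc (f (hlab e0))) < size (hinc e0).
  by rewrite (@hinc_size _ FG e0) /= /harity index_mem.
rewrite /= index_pad_src_inl // (nth_map w0) ?size_cat ?(leq_trans v_lt) ?leq_addr //.
by rewrite nth_cat v_lt.
Qed.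

Lemma flatten_del_edge : iso eq (hforget del_pos_inj harity_del_par) (flatten (relabel f G)).
Proof.
apply: (@iso_of_inj_surj _ eq P (flatten FG) del_vert del_edge).
- exact: del_vert_inj.
- exact: del_vert_surj.
- exact: del_edge_inj.
- exact: del_edge_surj.
- by case=> [[e h]|h].
- exact: del_inc.
rewrite /flatten /= -{1}(map_nth_lt_enum (hsrc G)) /forget_src -!map_comp.
apply: eq_map => i /=; set v := nth_lt (ltn_ord i).
have v_src : v \in del_src by apply: mem_del_src; rewrite /v (nth_ltE _ v) mem_nth.
rewrite (nth_ltE _ (inl (inl v))) (nth_map (inl v)) ?(nth_map v) ?size_map ?index_mem //=.
by rewrite nth_index.
Qed.
End DeleteEdge.

Section HRCompatible.
Variables (S : rset) (R : hg S -> hg S -> Prop) (R_HR : HR_compatible R).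
Let R_eqv : hequiv R. Proof. by case: R_HR. Qed.

Lemma HR_compatible_pad j g1 g2 : R g1 g2 -> R (hpad j g1) (hpad j g2).
Proof.
elim: j => [|j IH] R12; first exact: (hequiv_iso_lr R_eqv (hpad0 g1) (hpad0 g2) R12).
apply: (hequiv_iso_lr R_eqv (haddsrc_pad j g1) (haddsrc_pad j g2)).
by case: R_HR => _ _ R_addsrc _; apply/R_addsrc/IH.
Qed.

Lemma HR_compatible_flatten : flatten_compatible R.
Proof.
move=> B G; move n_G: #|hE G| => n; elim: n G n_G => [|n IH] G n_G f1 f2 Rf.
  have -> : relabel f2 G = relabel f1 G.
    by apply: relabel_ext => e; have := card0_eq n_G e; rewrite inE.
  exact: hequiv_refl.
have /card_gt0P [e0 _] : 0 < #|hE G| by rewrite n_G.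
apply: (hequiv_iso_lr R_eqv (flatten_del_edge e0 f1) (flatten_del_edge e0 f2)).
case: R_HR => _ R_par _ R_forget; apply: R_forget; apply: R_par.
  by apply: IH => [|e]; [rewrite card_hdel n_G | apply: Rf].
exact/HR_compatible_pad/Rf.
Qed.
End HRCompatible.

Lemma congruence_HR_compatibleP (S : rset) (R : hg S -> hg S -> Prop) :
  congruence R <-> HR_compatible R.
Proof.
split=> [|R_HR]; first exact: congruence_HR_compatible.
by apply/congruenceP; split; [case: R_HR | apply: HR_compatible_flatten].
Qed.

Lemma recognised_congruence (S A : rset) (L : hg S -> Prop) (pi : rmap (HR A) A) :
  finite_on_arities A -> recognised_by_alg L pi ->
  exists R, [/\ congruence R, finite_index R & saturates R L].
Proof.
move=> A_fin [h [h_hom [F LF]]]; exists (fun g g' => h g = h g'); split.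
- exact: kernel_congruence h_hom.
- exact: kernel_finite_index.
- move=> g g' hgg' /LF [Fg g0]; apply/LF; rewrite -hgg'; split=> //.
  by rewrite -(hequiv_arity (proj1 (kernel_congruence h_hom)) hgg').
Qed.

Lemma congruence_recognised (S : rset) (L : hg S -> Prop) (R : hg S -> hg S -> Prop) :
  (forall g, L g -> harity g = 0) -> congruence R -> finite_index R -> saturates R L ->
  exists (A : rset) (pi : rmap (HR A) A),
    [/\ is_Halg pi, finite_on_arities A & recognised_by_alg L pi].
Proof.
move=> L0 R_cong R_fin R_sat; exists (quot R), (qmul R_cong); split.
- exact: qmul_Halg.
- exact: quot_finite.
- exact: quot_recognises.
Qed.

Theorem theorem3p7 (S : rset) (L : hg S -> Prop)
  (HL0 : forall g : hg S, L g -> harity g = 0)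
  (HLiso : forall g g' : hg S, iso (@eq S) g g' -> L g -> L g') :
  ((exists (A : rset) (pi : rmap (HR A) A),
       [/\ is_Halg pi, finite_on_arities A & recognised_by_alg L pi])
   <->
   (exists R : hg S -> hg S -> Prop,
       [/\ congruence R, finite_index R & saturates R L]))
  /\
  ((exists R : hg S -> hg S -> Prop,
       [/\ congruence R, finite_index R & saturates R L])
   <->
   (exists R : hg S -> hg S -> Prop,
       [/\ HR_compatible R, finite_index R & saturates R L])).
Proof.
split; split.
- by case=> A [pi [_ A_fin L_rec]]; apply: recognised_congruence A_fin L_rec.
- by case=> R [R_cong R_fin R_sat]; apply: congruence_recognised R_cong R_fin R_sat.
- by case=> R [R_cong R_fin R_sat]; exists R; split=> //; apply/congruence_HR_compatibleP.
- by case=> R [R_HR R_fin R_sat]; exists R; split=> //; apply/congruence_HR_compatibleP.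
Qed.
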